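(* Let $\mathfrak g$, $m$, $\mathbb C(y)$, $a_i(n)$ and the maps $r_i$ ($i\in S$) be as in the context, and put $X^i_n:=a_i(n)^{-1}$. Let $\mathbf Y_{\chi_\varepsilon}\subset\mathbb C(y)$ be the intersection over $i\in S$ of the subrings generated by $\{y_j(n)^{\pm1}: j\ne i,\ n\in d\mathbb Z/d'm\mathbb Z\}$ together with $\{y_i(n)(1+X^i_n): n\in d\mathbb Z/d'm\mathbb Z\}$ (the image of the $q$-character at a root of unity $q$ with $q^{2d'm}=1$). Then $\mathbf Y_{\chi_\varepsilon}$ is invariant under the action of $W(\mathfrak g)$ generated by the $r_i$: $r_i(f)=f$ for all $f\in\mathbf Y_{\chi_\varepsilon}$ and all $i\in S$.
   Context: Let $\mathfrak g$ be a finite-dimensional complex simple Lie algebra of rank $\ell$, $S=\{1,\dots,\ell\}$, of type $A_\ell$, $B_\ell$, $C_\ell$, $D_\ell$ ($\ell\ge4$), $E_{6,7,8}$, $F_4$ or $G_2$, labelled: $A_\ell,B_\ell,C_\ell$ chain $1-\cdots-\ell$ ($\alpha_\ell$ short in $B_\ell$, long in $C_\ell$); $D_\ell$: chain $1-\cdots-(\ell-1)$ plus edge $(\ell-2)-\ell$; $E_\ell$: chain $1-2-3-5-\cdots-\ell$ plus edge $3-4$; $F_4$: chain $1-2-3-4$, $\alpha_1,\alpha_2$ long; $G_2$: $\alpha_2$ long. $d_i=(\alpha_i,\alpha_i)/2$: $1$ in types $A,D,E$; $(1,\dots,1,\frac12)$ for $B_\ell$; $(1,\dots,1,2)$ for $C_\ell$;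 $(1,1,\frac12,\frac12)$ for $F_4$; $(1,3)$ for $G_2$; $d=\min d_i$, $d'=\max d_i$. Let $m$ be an integer, $m>1$, $m>\ell-1$. Quiver $Q_m(\mathfrak g)$ on $\{v^i_n: i\in S, n\in d\mathbb Z/d'm\mathbb Z\}$ with arrows (indices mod $d'm$): (simply-laced) orient Dynkin edges from larger to smaller label ($C(\mathfrak g)$); $v^i_n\to v^i_{n+1}$, and for each $i\to j$ in $C(\mathfrak g)$, $v^i_n\to v^j_n$ and $v^j_{n+1}\to v^i_n$. ($B_\ell$) $v^i_n\to v^i_{n+1}$ ($i\le\ell-1$); $v^i_n\to v^{i-1}_n$, $v^{i-1}_{n+1}\to v^i_n$ ($2\le i\le\ell-1$); $v^\ell_n\to v^\ell_{n+1/2}$, $v^\ell_n\to v^{\ell-1}_{n-1/2}$, $v^{\ell-1}_{n+1/2}\to v^\ell_n$. ($C_\ell$) $v^i_n\to v^i_{n+1}$ ($i\le\ell-1$); $v^i_n\to v^{i-1}_n$, $v^{i-1}_{n+1}\to v^i_n$ ($2\le i\le\ell-1$); $v^\ell_n\to v^\ell_{n+2}$, $v^\ell_n\to v^{\ell-1}_n$, $v^{\ell-1}_{n+2}\to v^\ell_n$. ($F_4$) $v^i_n\to v^i_{n+1}$ ($i=1,2$); $v^2_n\to v^1_n$, $v^1_{n+1}\to v^2_n$; $v^3_n\to v^3_{n+1/2}$, $v^3_n\to v^2_{n-1/2}$, $v^2_{n+1/2}\to v^3_n$; $v^4_n\to v^4_{n+1/2}$, $v^4_n\to v^3_n$, $v^3_{n+1/2}\to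 v^4_n$. ($G_2$) $v^1_n\to v^1_{n+1}$, $v^2_n\to v^2_{n+3}$, $v^2_n\to v^1_n$, $v^1_{n+3}\to v^2_n$. $\mathbb C(y)$ is the field of rational functions in $y_i(n)$, $i\in S$, $n\in d\mathbb Z/d'm\mathbb Z$; $a_i(n)=y_i(n)y_i(n+d_i)/F(i,n)$ with $F(i,n)=\prod_{j:\,v^i_n\to v^j_n}y_j(n+d_j)\prod_{j:\,v^j_n\to v^i_n}y_j(n)$, except $F(i,n)=y_{i-1}(n+\frac12)y_{i+1}(n)$ for $i=\ell$ in $B_\ell$ and $i=3$ in $F_4$; $F(i,n)=y_{i-1}(n+1)y_{i+1}(n)y_{i+1}(n+\frac12)$ for $i=\ell-1$ in $B_\ell$ and $i=2$ in $F_4$; $F(\ell,n)=y_{\ell-1}(n+1)y_{\ell-1}(n+2)$ in $C_\ell$; $F(2,n)=y_1(n+1)y_1(n+2)y_1(n+3)$ in $G_2$; with $y_0:=y_{\ell+1}:=1$. $f_y(i,n)=1+\sum_{k=0}^{d'm/d_i-2}(a_i(n)a_i(n-d_i)\cdots a_i(n-kd_i))^{-1}$, and $r_i$ is the field endomorphism of $\mathbb C(y)$ with $r_i(y_i(n))=\frac{f_y(i,n-2d_i)}{f_y(i,n-d_i)}\frac{F(i,n-d_i)}{y_i(n-d_i)}$, $r_i(y_j(n))=y_j(n)$ for $j\ne i$. These $r_i$ generate an action of the Weyl group $W(\mathfrak g)$ on $\mathbb C(y)$. *)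

From HB Require Import structures.
From mathcomp Require Import all_boot all_order all_algebra.
From mathcomp Require Import Rstruct complex mpoly.

Unset Implicit Arguments.
Unset Strict Implicit.
Unset Printing Implicit Defensive.
Import Order.TTheory GRing.Theory Num.Theory.
Local Open Scope ring_scope.
Local Notation "x %:F" := (@FracField.tofrac _ x) : ring_scope.

Definition Cc : fieldType := (Rdefinitions.R)[i].

(* Cartan types.  Labels of simple roots are 1..l (nat).                *)
Inductive ltype := TA | TB | TC | TD | TE | TF | TG.

Definition valid_type (t : ltype) (l : nat) : bool :=
  match t with
  | TA => (1 <= l)%N
  | TB => (2 <= l)%N
  | TC => (2 <= l)%N
  | TD => (4 <= l)%N
  | TE => (6 <= l <= 8)%N
  | TF => l == 4%N
  | TG => l == 2%N
  end.

(* d_i = (alpha_i, alpha_i)/2 *)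
Definition di (t : ltype) (l i : nat) : rat :=
  match t with
  | TB => if i == l then 1 / 2 else 1
  | TC => if i == l then 2 else 1
  | TF => if (i <= 2)%N then 1 else 1 / 2
  | TG => if i == 2%N then 3 else 1
  | _ => 1
  end.

Definition dmin (t : ltype) (l : nat) : rat :=
  \big[Num.min/di t l 1]_(i <- iota 1 l) di t l i.
Definition dmax (t : ltype) (l : nat) : rat :=
  \big[Num.max/di t l 1]_(i <- iota 1 l) di t l i.

(* Positions n in d Z are encoded by integers k with n = k * d.
   A (rational) shift s (a multiple of d) is encoded by s / d. *)
Definition sh (t : ltype) (l : nat) (s : rat) : int := numq (s / dmin t l).

(* d' m / d : the number of classes of d Z / d' m Z *)
Definition NN (t : ltype) (l m : nat) : int :=
  numq (dmax t l * m%:R / dmin t l).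

Definition eqpos (t : ltype) (l m : nat) (k k' : int) : bool :=
  (k == k' %[mod NN t l m])%Z.

(* Dynkin diagrams (simply-laced types) and the orientation C(g):
   edges oriented from larger to smaller label. *)
Definition dynkin_edge (t : ltype) (l i j : nat) : bool :=
  [&& (1 <= i)%N, (i < j)%N, (j <= l)%N &
  match t with
  | TA => j == i.+1
  | TD => ((j == i.+1) && (j <= l.-1)%N) || ((i == l - 2)%N && (j == l))
  | TE => [|| (i == 1%N) && (j == 2%N), (i == 2%N) && (j == 3%N),
             (i == 3%N) && (j == 4%N), (i == 3%N) && (j == 5%N)
           | (5 <= i)%N && (j == i.+1)]
  | _ => false
  end].

Definition Carrow (t : ltype) (l i j : nat) : bool := dynkin_edge t l j i.

Definition qarrow (t : ltype) (l m : nat) (x : nat) (p : int) (y : nat) (q : int)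
  : bool :=
  let E := eqpos t l m in
  let s := sh t l in
  [&& (1 <= x <= l)%N, (1 <= y <= l)%N &
  match t with
  | TA | TD | TE =>
      [|| (x == y) && E q (p + s 1),
          Carrow t l x y && E q p
        | Carrow t l y x && E q (p - s 1)]
  | TB =>
      [|| [&& x == y, (x <= l.-1)%N & E q (p + s 1)],
          [&& (2 <= x <= l.-1)%N, y == x.-1 & E q p],
          [&& (2 <= y <= l.-1)%N, x == y.-1 & E q (p - s 1)],
          [&& x == l, y == l & E q (p + s (1/2))],
          [&& x == l, y == l.-1 & E q (p + s (-(1/2)))]
        | [&& x == l.-1, y == l & E q (p - s (1/2))]]
  | TC =>
      [|| [&& x == y, (x <= l.-1)%N & E q (p + s 1)],
          [&& (2 <= x <= l.-1)%N, y == x.-1 & E q p],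
          [&& (2 <= y <= l.-1)%N, x == y.-1 & E q (p - s 1)],
          [&& x == l, y == l & E q (p + s 2)],
          [&& x == l, y == l.-1 & E q p]
        | [&& x == l.-1, y == l & E q (p - s 2)]]
  | TF =>
      [|| [&& x == y, (x <= 2)%N & E q (p + s 1)],
          [&& x == 2%N, y == 1%N & E q p],
          [&& x == 1%N, y == 2%N & E q (p - s 1)],
          [&& x == 3%N, y == 3%N & E q (p + s (1/2))],
          [&& x == 3%N, y == 2%N & E q (p + s (-(1/2)))],
          [&& x == 2%N, y == 3%N & E q (p - s (1/2))],
          [&& x == 4%N, y == 4%N & E q (p + s (1/2))],
          [&& x == 4%N, y == 3%N & E q p]
        | [&& x == 3%N, y == 4%N & E q (p - s (1/2))]]
  | TG =>
      [|| [&& x == 1%N, y == 1%N & E q (p + s 1)],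
          [&& x == 2%N, y == 2%N & E q (p + s 3)],
          [&& x == 2%N, y == 1%N & E q p]
        | [&& x == 1%N, y == 2%N & E q (p - s 3)]]
  end].

(* The field C(y) of rational functions in the y_i(n),
   i in 1..l, n in d Z / d' m Z.  Variable y_i(n) (n = k d) is 'X_(yvar i k). *)
Definition nvars (t : ltype) (l m : nat) : nat := (l * absz (NN t l m)).-1.+1.

Definition Cy (t : ltype) (l m : nat) : fieldType :=
  {fraction {mpoly Cc[nvars t l m]}}.

Definition yvar (t : ltype) (l m : nat) (i : nat) (k : int) : 'I_(nvars t l m) :=
  inord ((i.-1) * absz (NN t l m) + absz (k %% NN t l m)%Z)%N.

(* y_i(n), with the convention y_0 = y_{l+1} = 1 *)
Definition yy (t : ltype) (l m : nat) (i : nat) (k : int) : Cy t l m :=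
  if (1 <= i <= l)%N then ('X_(yvar t l m i k) : {mpoly Cc[nvars t l m]})%:F
  else 1.

Definition FF (t : ltype) (l m : nat) (i : nat) (k : int) : Cy t l m :=
  let y := yy t l m in
  let s := sh t l in
  match t with
  | TB =>
      if i == l then y l.-1 (k + s (1/2)) * y l.+1 k
      else if i == l.-1 then y (i.-1) (k + s 1) * y i.+1 k * y i.+1 (k + s (1/2))
      else \prod_(j <- iota 1 l)
             ((if qarrow t l m i k j k then y j (k + s (di t l j)) else 1) *
              (if qarrow t l m j k i k then y j k else 1))
  | TF =>
      if i == 3%N then y 2%N (k + s (1/2)) * y 4%N k
      else if i == 2%N then y 1%N (k + s 1) * y 3%N k * y 3%N (k + s (1/2))
      else \prod_(j <- iota 1 l)
             ((if qarrow t l m i k j k then y j (k + s (di t l j)) else 1) *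
              (if qarrow t l m j k i k then y j k else 1))
  | TC =>
      if i == l then y l.-1 (k + s 1) * y l.-1 (k + s 2)
      else \prod_(j <- iota 1 l)
             ((if qarrow t l m i k j k then y j (k + s (di t l j)) else 1) *
              (if qarrow t l m j k i k then y j k else 1))
  | TG =>
      if i == 2%N then y 1%N (k + s 1) * y 1%N (k + s 2) * y 1%N (k + s 3)
      else \prod_(j <- iota 1 l)
             ((if qarrow t l m i k j k then y j (k + s (di t l j)) else 1) *
              (if qarrow t l m j k i k then y j k else 1))
  | _ =>
      \prod_(j <- iota 1 l)
        ((if qarrow t l m i k j k then y j (k + s (di t l j)) else 1) *
         (if qarrow t l m j k i k then y j k else 1))
  end.

Definition aa (t : ltype) (l m : nat) (i : nat) (k : int) : Cy t l m :=
  yy t l m i k * yy t l m i (k + sh t l (di t l i)) / FF t l m i k.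

(* f_y(i, n) = 1 + sum_{p=0}^{d'm/d_i - 2} (a_i(n) a_i(n-d_i) ... a_i(n-p d_i))^{-1};
   here d'm/d_i = (d'm/d) / (d_i/d). *)
Definition fy (t : ltype) (l m : nat) (i : nat) (k : int) : Cy t l m :=
  let e := sh t l (di t l i) in
  1 + \sum_(p < (absz (NN t l m) %/ absz e).-1)
        (\prod_(q < p.+1) aa t l m i (k - q%:Z * e))^-1.

Definition r_img (t : ltype) (l m : nat) (i : nat) (v : 'I_(nvars t l m)) : Cy t l m :=
  let N := absz (NN t l m) in
  let j := ((v %/ N).+1)%N in
  let k : int := (v %% N)%N in
  let e := sh t l (di t l i) in
  if j == i then
    fy t l m i (k - 2%:Z * e) / fy t l m i (k - e) * (FF t l m i (k - e) / yy t l m i (k - e))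
  else ('X_v : {mpoly Cc[nvars t l m]})%:F.

Definition r_poly (t : ltype) (l m : nat) (i : nat) (P : {mpoly Cc[nvars t l m]})
  : Cy t l m :=
  mmap (fun c : Cc => (c%:MP : {mpoly Cc[nvars t l m]})%:F) (r_img t l m i) P.

Definition r (t : ltype) (l m : nat) (i : nat) (f : Cy t l m) : Cy t l m :=
  r_poly t l m i (\n_(repr f)) / r_poly t l m i (\d_(repr f)).

Inductive gen_subring {L : nzRingType} (G : L -> Prop) : L -> Prop :=
  | gsr_gen x : G x -> gen_subring G x
  | gsr_one : gen_subring G 1
  | gsr_sub x y : gen_subring G x -> gen_subring G y -> gen_subring G (x - y)
  | gsr_mul x y : gen_subring G x -> gen_subring G y -> gen_subring G (x * y).

Definition Kgen (t : ltype) (l m : nat) (i : nat) (z : Cy t l m) : Prop :=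
  (exists j k, [/\ (1 <= j <= l)%N, j != i & (z = yy t l m j k \/ z = (yy t l m j k)^-1)])
  \/ (exists k, z = yy t l m i k * (1 + (aa t l m i k)^-1)).

Definition Ychi (t : ltype) (l m : nat) (f : Cy t l m) : Prop :=
  forall i, (1 <= i <= l)%N -> gen_subring (Kgen t l m i) f.

From HB Require Import structures.
From mathcomp Require Import all_boot all_order all_algebra.
From mathcomp Require Import Rstruct complex mpoly.
From mathcomp Require Import generic_quotient.
From mathcomp Require Import ring lra zify.
Import Order.TTheory GRing.Theory Num.Theory.
Local Open Scope ring_scope.
Local Notation "x %:F" := (@FracField.tofrac _ x) : ring_scope.

(* Put Y := y_i, F := F(i, .), X_n := a_i(n)^-1, and let P be the product of the X_n
   over one period n, n - d_i, ..., n - (d'm/d_i - 1) d_i; P does not depend on n.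
   Then f_y(i, n) = 1 - P + X_n f_y(i, n - d_i), and r_i (y_i(n)) = ry Y n, where
   ry Y n := f_y(i, n - 2d_i) / f_y(i, n - d_i) * F(n - d_i) / Y(n - d_i), while r_i fixes the
   other variables, hence also F.  Substituting ry Y for Y, the sum defining f_y telescopes
   to r_i (f_y(i, n)) = X_n f_y(i, n - d_i) / P.  Two identities follow by direct
   computation: ry (ry Y) = Y, so the substitution is an involution on polynomials, hence
   injective, and r_i (computed on an arbitrary representative) is really the induced field
   endomorphism; and ry Y (1 + X(ry Y)) = Y (1 + X(Y)), i.e. r_i fixes y_i(n) (1 + X^i_n).
   The generators y_j(n)^{+-1}, j <> i, are fixed anyway, so r_i fixes the subring they span.
   The nondegeneracy conditions f_y <> 0 and P <> 1 are checked by specializing every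
   variable to 1 (f_y becomes d'm/d_i), resp. y_i to 2 and the others to 1 (P becomes
   4^(-d'm/d_i)). *)

Lemma frac_numden (R : idomainType) (x : {fraction R}) :
  x = (\n_(repr x))%:F / (\d_(repr x))%:F.
Proof.
have d0 : (\d_(repr x))%:F != 0 by rewrite tofrac_eq0 denom_ratioP.
apply: (mulIf d0); rewrite mulfVK //.
set y := repr x; have -> : x = \pi_({fraction R})%qT y by rewrite reprK.
unlock FracField.tofrac.
transitivity (\pi_({fraction R})%qT (FracField.mulf y (Ratio \d_y 1))).
  by rewrite FracField.pi_mul.
apply/eqmodP; rewrite /= FracField.equivfE /FracField.mulf /=.
by rewrite !numden_Ratio ?(oner_neq0, mulf_neq0, denom_ratioP) // !mulr1 mulrC.
Qed.

Section FracEval.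
Set Implicit Arguments.
Unset Strict Implicit.
Variables (R : idomainType) (K : fieldType) (phi : {rmorphism R -> K}).

(* Graph of the partial extension of [phi] to fractions. *)
Definition frac_eval (x : {fraction R}) (v : K) : Prop :=
  exists n d, [/\ d != 0, phi d != 0, x = n%:F / d%:F & v = phi n / phi d].

Lemma frac_eval_uniq x v w : frac_eval x v -> frac_eval x w -> v = w.
Proof.
move=> [n [d [d0 pd0 -> ->]]] [n' [d' [d0' pd0' E ->]]].
have /eqP : (n * d')%:F = (n' * d)%:F.
  have hd : d%:F != 0 by rewrite tofrac_eq0.
  have hd' : d'%:F != 0 by rewrite tofrac_eq0.
  move: E => /(congr1 (fun z => z * d%:F * d'%:F)).
  by rewrite !rmorphM /= mulfVK // [n'%:F / _ * _ * _]mulrAC mulfVK // mulrC => ->.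
rewrite tofrac_eq => /eqP /(congr1 phi); rewrite !rmorphM /= => h.
by apply/eqP; rewrite eqr_div // h mulrC.
Qed.

Lemma frac_eval_tofrac a : frac_eval a%:F (phi a).
Proof. by exists a, 1; rewrite ?rmorph1 ?oner_eq0 ?divr1. Qed.

Lemma frac_eval0 : frac_eval 0 0.
Proof. by have := frac_eval_tofrac 0; rewrite !rmorph0. Qed.

Lemma frac_eval1 : frac_eval 1 1.
Proof. by have := frac_eval_tofrac 1; rewrite !rmorph1. Qed.

Lemma frac_evalD x y v w : frac_eval x v -> frac_eval y w -> frac_eval (x + y) (v + w).
Proof.
move=> [n [d [d0 pd0 -> ->]]] [n' [d' [d0' pd0' -> ->]]].
have hd : d%:F != 0 by rewrite tofrac_eq0.
have hd' : d'%:F != 0 by rewrite tofrac_eq0.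
exists (n * d' + n' * d), (d * d').
by rewrite rmorphM !mulf_neq0 // !addf_div // !rmorphD !rmorphM.
Qed.

Lemma frac_evalN x v : frac_eval x v -> frac_eval (- x) (- v).
Proof.
by move=> [n [d [d0 pd0 -> ->]]]; exists (- n), d; split=> //; rewrite ?rmorphN mulNr.
Qed.

Lemma frac_evalB x y v w : frac_eval x v -> frac_eval y w -> frac_eval (x - y) (v - w).
Proof. by move=> hx /frac_evalN; apply: frac_evalD. Qed.

Lemma frac_evalM x y v w : frac_eval x v -> frac_eval y w -> frac_eval (x * y) (v * w).
Proof.
move=> [n [d [d0 pd0 -> ->]]] [n' [d' [d0' pd0' -> ->]]].
exists (n * n'), (d * d'); rewrite !rmorphM !mulf_neq0 //.
by split=> //; rewrite mulrACA invfM.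
Qed.

Lemma frac_evalV x v : frac_eval x v -> v != 0 -> frac_eval x^-1 v^-1.
Proof.
move=> [n [d [d0 pd0 -> ->]]] hv.
have pn0 : phi n != 0 by apply: contraNneq hv => ->; rewrite mul0r.
have n0 : n != 0 by apply: contraNneq pn0 => ->; rewrite rmorph0.
by exists d, n; rewrite !invf_div.
Qed.

Lemma frac_eval_neq0 x v : frac_eval x v -> v != 0 -> x != 0.
Proof.
move=> h; apply: contraNneq => x0.
by apply/eqP/(frac_eval_uniq h); rewrite x0; apply: frac_eval0.
Qed.

Lemma frac_eval_sum (I : Type) (s : seq I) (F : I -> {fraction R}) (G : I -> K) :
  (forall j, frac_eval (F j) (G j)) ->
  frac_eval (\sum_(j <- s) F j) (\sum_(j <- s) G j).
Proof. by move=> h; apply: (big_ind2 frac_eval frac_eval0) => // *; apply: frac_evalD. Qed.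

Lemma frac_eval_prod (I : Type) (s : seq I) (F : I -> {fraction R}) (G : I -> K) :
  (forall j, frac_eval (F j) (G j)) ->
  frac_eval (\prod_(j <- s) F j) (\prod_(j <- s) G j).
Proof. by move=> h; apply: (big_ind2 frac_eval frac_eval1) => // *; apply: frac_evalM. Qed.

Lemma frac_evalX x v k : frac_eval x v -> frac_eval (x ^+ k) (v ^+ k).
Proof.
move=> h; elim: k => [|k IH]; first by rewrite !expr0; apply: frac_eval1.
by rewrite !exprS; apply: frac_evalM.
Qed.

Lemma frac_eval_repr : injective phi ->
  forall x, frac_eval x (phi \n_(repr x) / phi \d_(repr x)).
Proof.
move=> phi_inj x; exists \n_(repr x), \d_(repr x).
split=> //; [exact: denom_ratioP | | exact: frac_numden].
by rewrite -(rmorph0 phi) (inj_eq phi_inj) denom_ratioP.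
Qed.

End FracEval.

Arguments frac_eval0 {R K phi}.
Arguments frac_eval1 {R K phi}.

Lemma frac_eval_mevalX n (K : fieldType) (w : 'I_n -> K) v :
  frac_eval (meval w) ('X_v)%:F (w v).
Proof. by rewrite -[w v](mevalXU w v); apply: frac_eval_tofrac. Qed.

(* The rank one computation: [Y], [F], [e], [M] stand for y_i, F(i, .), d_i/d and d'm/d_i
   (positions are integers counting multiples of d).  Replacing [Y] by [ry Y] turns [a Y],
   [X Y] and [f Y] into the images of a_i, X^i and f_y(i, .) under r_i. *)
Module Rank1.
Section Formulas.
Set Implicit Arguments.
Unset Strict Implicit.
Variables (K : fieldType) (e : int) (M : nat) (F : int -> K).

Definition a (Y : int -> K) x := Y x * Y (x + e) / F x.
Definition X Y x := (a Y x)^-1.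
Definition f Y x := 1 + \sum_(p < M.-1) (\prod_(q < p.+1) a Y (x - q%:Z * e))^-1.
Definition ry Y x := f Y (x - 2%:Z * e) / f Y (x - e) * (F (x - e) / Y (x - e)).
Definition Xprod Y x p := \prod_(q < p) X Y (x - q%:Z * e).
Definition Xper Y x := Xprod Y x M.

Section Translation.
Variables (Y : int -> K) (d : int).
Hypothesis Y_transl : forall x, Y (x + d) = Y x.
Hypothesis F_transl : forall x, F (x + d) = F x.

Lemma a_transl x : a Y (x + d) = a Y x.
Proof. by rewrite /a Y_transl F_transl addrAC Y_transl. Qed.

Lemma f_transl x : f Y (x + d) = f Y x.
Proof.
congr (1 + _); apply: eq_bigr => p _; congr (_^-1).
by apply: eq_bigr => q _; rewrite addrAC a_transl.
Qed.

Lemma ry_transl x : ry Y (x + d) = ry Y x.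
Proof. by rewrite /ry !(addrAC x d) !f_transl F_transl Y_transl. Qed.

End Translation.

Section Reflection.
Variable Y : int -> K.
Hypothesis M_ge2 : (2 <= M)%N.
Hypothesis Y_neq0 : forall x, Y x != 0.
Hypothesis F_neq0 : forall x, F x != 0.
Hypothesis Y_per : forall z x, Y (x + z * (M%:Z * e)) = Y x.
Hypothesis F_per : forall z x, F (x + z * (M%:Z * e)) = F x.

Let Y_back x : Y (x - M%:Z * e) = Y x.
Proof. by rewrite -[in RHS](Y_per (-1)) mulN1r. Qed.

Let F_back x : F (x - M%:Z * e) = F x.
Proof. by rewrite -[in RHS](F_per (-1)) mulN1r. Qed.

Lemma a_neq0 x : a Y x != 0.
Proof. by rewrite !mulf_neq0 ?invr_eq0. Qed.

Lemma X_neq0 x : X Y x != 0.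
Proof. by rewrite invr_eq0 a_neq0. Qed.

Lemma Xprod_neq0 x p : Xprod Y x p != 0.
Proof. by apply/prodf_neq0 => q _; apply: X_neq0. Qed.

Lemma XprodS x p : Xprod Y x p.+1 = X Y x * Xprod Y (x - e) p.
Proof.
rewrite /Xprod big_ord_recl mul0r subr0; congr (_ * _).
by apply: eq_bigr => q _; rewrite /bump /= intS; congr (X Y _); ring.
Qed.

Lemma f_Xprod x : f Y x = \sum_(p < M) Xprod Y x p.
Proof.
rewrite /f; case: M M_ge2 => // M' _; rewrite big_ord_recl /Xprod big_ord0 /=.
by congr (_ + _); apply: eq_bigr => p _; rewrite -prodfV.
Qed.

Lemma Xper_shift x : Xper Y (x - e) = Xper Y x.
Proof.
have M_pred := prednK (ltnW M_ge2).
rewrite /Xper -M_pred [in RHS]XprodS /Xprod big_ord_recr /= mulrC; congr (_ * _).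
rewrite /X -[in RHS](a_transl Y_back F_back x); congr (a Y _)^-1.
by rewrite -[in RHS]M_pred intS; ring.
Qed.

Lemma Xper_const x j : Xper Y (x - j%:Z * e) = Xper Y x.
Proof.
elim: j x => [|j IH] x; first by rewrite mul0r subr0.
by rewrite intS mulrDl mul1r opprD addrA IH Xper_shift.
Qed.

Lemma f_rec x : f Y x = 1 - Xper Y x + X Y x * f Y (x - e).
Proof.
rewrite !f_Xprod /Xper; case: M M_ge2 => // M' _.
rewrite big_ord_recl big_ord_recr /= XprodS.
have -> : Xprod Y x 0 = 1 by rewrite /Xprod big_ord0.
have -> : \sum_(i < M') Xprod Y x (bump 0 i) =
    X Y x * \sum_(i < M') Xprod Y (x - e) i.
  by rewrite big_distrr; apply: eq_bigr => p _; rewrite XprodS.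
ring.
Qed.

Hypothesis f_neq0 : forall x, f Y x != 0.
Hypothesis Xper_neq1 : forall x, Xper Y x != 1.

Lemma ry_neq0 x : ry Y x != 0.
Proof. by rewrite !mulf_neq0 ?invr_eq0. Qed.

Lemma a_ry x : a (ry Y) x = f Y (x - 2%:Z * e) * X Y (x - e) / f Y x.
Proof.
rewrite /a /ry /X /a.
have -> : x + e - 2%:Z * e = x - e by ring.
have -> : x + e - e = x by ring.
have -> : x - e + e = x by ring.
move: (f_neq0 x) (f_neq0 (x - e)) (f_neq0 (x - 2%:Z * e)).
move: (Y_neq0 x) (Y_neq0 (x - e)) (F_neq0 x) (F_neq0 (x - e)) => *.
by field; rewrite !f_neq0 !F_neq0 !Y_neq0.
Qed.

Lemma ry_gen x : ry Y x * (1 + X (ry Y) x) = Y x * (1 + X Y x).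
Proof.
rewrite [X (ry Y) x]/X a_ry.
have F_X : F (x - e) = X Y (x - e) * (Y (x - e) * Y x).
  by rewrite /X /a subrK invf_div mulfVK // mulf_neq0.
have rec_x := f_rec x.
have rec_xe := f_rec (x - e).
rewrite Xper_shift (_ : x - e - e = x - 2%:Z * e) in rec_xe; last by ring.
have one_sub : 1 - Xper Y x = f Y (x - e) - X Y (x - e) * f Y (x - 2%:Z * e).
  by rewrite [in RHS]rec_xe; ring.
rewrite /ry rec_x one_sub F_X.
have den :
    f Y (x - e) - X Y (x - e) * f Y (x - 2%:Z * e) + X Y x * f Y (x - e) != 0.
  by rewrite -one_sub -rec_x f_neq0.
move: (f_neq0 (x - 2%:Z * e)) (f_neq0 (x - e)) (X_neq0 (x - e)).
move: (Y_neq0 x) (Y_neq0 (x - e)) => *.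
by field; rewrite den ?f_neq0 ?Y_neq0 ?X_neq0.
Qed.

Section Telescoping.
Variable x : int.
Let Fn j := f Y (x - j%:Z * e).
Let Xn j := X Y (x - j%:Z * e).
Let c := 1 - Xper Y x.

Let Fn_rec j : Fn j = c + Xn j * Fn j.+1.
Proof.
rewrite /Fn /Xn /c f_rec Xper_const.
have -> : x - j%:Z * e - e = x - j.+1%:Z * e by rewrite intS; ring.
by [].
Qed.

Let Fn_neq0 j : Fn j != 0. Proof. exact: f_neq0. Qed.
Let Xn_neq0 j : Xn j != 0. Proof. exact: X_neq0. Qed.

Let Xn_prod_neq0 p : \prod_(q < p) Xn q.+1 != 0.
Proof. by apply/prodf_neq0 => q _; apply: X_neq0. Qed.

Let a_ryV q : (a (ry Y) (x - q%:Z * e))^-1 = Fn q / (Fn q.+2 * Xn q.+1).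
Proof.
rewrite a_ry invf_div /Fn /Xn.
have -> : x - q%:Z * e - 2%:Z * e = x - q.+2%:Z * e by rewrite !intS; ring.
by have -> : x - q%:Z * e - e = x - q.+1%:Z * e by rewrite intS; ring.
Qed.

Let prod_a_ryV p : \prod_(q < p) (Fn q / (Fn q.+2 * Xn q.+1)) =
  Fn 0 * Fn 1 / (Fn p * Fn p.+1 * \prod_(q < p) Xn q.+1).
Proof.
elim: p => [|p IH].
  by rewrite !big_ord0; move: (Fn_neq0 0) (Fn_neq0 1) => *; field; rewrite !Fn_neq0.
rewrite !big_ord_recr /= IH.
move: (Fn_neq0 0) (Fn_neq0 1) (Fn_neq0 p) (Fn_neq0 p.+1) (Fn_neq0 p.+2).
move: (Xn_neq0 p.+1) (Xn_prod_neq0 p) => *.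
by field; rewrite ?Fn_neq0 ?Xn_neq0 ?Xn_prod_neq0.
Qed.

Let sum_prod_a_ryV j :
  c * \sum_(p < j) (Fn 0 * Fn 1 / (Fn p.+1 * Fn p.+2 * \prod_(q < p.+1) Xn q.+1))
  = Fn 0 * Fn 1 * (1 / (Fn j.+1 * \prod_(q < j) Xn q.+1) - 1 / Fn 1).
Proof.
elim: j => [|j IH].
  by rewrite !big_ord0; move: (Fn_neq0 1) => *; field; rewrite Fn_neq0.
rewrite big_ord_recr /= mulrDr IH [\prod_(q < j.+1) _]big_ord_recr /=.
have -> : c = Fn j.+1 - Xn j.+1 * Fn j.+2 by rewrite [Fn j.+1]Fn_rec; ring.
move: (Fn_neq0 0) (Fn_neq0 1) (Fn_neq0 j.+1) (Fn_neq0 j.+2).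
move: (Xn_neq0 j.+1) (Xn_prod_neq0 j) => *.
by field; rewrite ?Fn_neq0 ?Xn_neq0 ?Xn_prod_neq0.
Qed.

Lemma f_ry : f (ry Y) x = X Y x * f Y (x - e) / Xper Y x.
Proof.
have M_pred := prednK (ltnW M_ge2).
have Fn0E : Fn 0 = f Y x by rewrite /Fn mul0r subr0.
have FnM : Fn M = Fn 0 by rewrite Fn0E -(f_transl Y_back F_back x).
have Fn1E : Fn 1 = f Y (x - e) by rewrite /Fn mul1r.
have Xn0E : Xn 0 = X Y x by rewrite /Xn mul0r subr0.
have XperE : Xper Y x = Xn 0 * \prod_(q < M.-1) Xn q.+1.
  by rewrite /Xper /Xprod -M_pred big_ord_recl.
have c_neq0 : c != 0 by rewrite subr_eq0 eq_sym Xper_neq1.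
have sum_ry : \sum_(p < M.-1) (\prod_(q < p.+1) a (ry Y) (x - q%:Z * e))^-1 =
    Fn 0 * Fn 1 * (1 / (Fn 0 * \prod_(q < M.-1) Xn q.+1) - 1 / Fn 1) / c.
  have := sum_prod_a_ryV M.-1; rewrite M_pred FnM => <-.
  rewrite [c * _]mulrC mulfK //.
  apply: eq_bigr => p _; rewrite -prodfV -prod_a_ryV.
  by apply: eq_bigr => q _; apply: a_ryV.
rewrite -Fn1E -Xn0E /f sum_ry.
move: (Fn_neq0 0) (Fn_neq0 1) (Xn_neq0 0) (Xn_prod_neq0 M.-1) c_neq0.
rewrite (Fn_rec 0) /c XperE; set pi := \prod_(q < M.-1) Xn q.+1.
move=> Fn0_neq0 Fn1_neq0 Xn0_neq0 pi_neq0 c_neq0'.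
by field; rewrite pi_neq0 Xn0_neq0 c_neq0' Fn1_neq0 Fn0_neq0.
Qed.
End Telescoping.

Lemma f_ry_neq0 x : f (ry Y) x != 0.
Proof. by rewrite f_ry !mulf_neq0 ?X_neq0 ?f_neq0 ?invr_eq0 //; apply: Xprod_neq0. Qed.

Lemma ryK x : ry (ry Y) x = Y x.
Proof.
rewrite /ry !f_ry (Xper_const x 2) Xper_shift.
have -> : x - 2%:Z * e - e = x - 3%:Z * e by ring.
have -> : x - e - 2%:Z * e = x - 3%:Z * e by ring.
have -> : x - e - e = x - 2%:Z * e by ring.
have -> : X Y (x - 2%:Z * e) = F (x - 2%:Z * e) / (Y (x - 2%:Z * e) * Y (x - e)).
  by rewrite /X /a invf_div (_ : x - 2%:Z * e + e = x - e) //; ring.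
have -> : X Y (x - e) = F (x - e) / (Y (x - e) * Y x) by rewrite /X /a subrK invf_div.
move: (f_neq0 (x - 3%:Z * e)) (f_neq0 (x - 2%:Z * e)).
move: (F_neq0 (x - e)) (F_neq0 (x - 2%:Z * e)).
move: (Y_neq0 x) (Y_neq0 (x - e)) (Y_neq0 (x - 2%:Z * e)) (Xprod_neq0 x M).
move=> f3 f2 F1 F2 Y0 Y1 Y2 P0.
by field; rewrite f3 f2 F1 F2 Y0 Y1 Y2 P0.
Qed.

End Reflection.
End Formulas.
End Rank1.

Definition r_morph t l m i : {rmorphism {mpoly Cc[nvars t l m]} -> Cy t l m} :=
  mmap ((@FracField.tofrac _ \o (@mpolyC _ _)) : {rmorphism _ -> _}) (r_img t l m i).

Lemma r_morphX t l m i v : r_morph t l m i 'X_v = r_img t l m i v.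
Proof. by rewrite [LHS]mmapX mmap1U. Qed.

Lemma r_morphC t l m i c : r_morph t l m i c%:MP = (c%:MP)%:F.
Proof. by rewrite [LHS]mmapC. Qed.

Lemma eqpos_dvd t l m a b : eqpos t l m a b = (NN t l m %| a - b)%Z.
Proof. by rewrite /eqpos eqz_mod_dvd. Qed.

Lemma eqpos_addr t l m p q c : eqpos t l m (q + c) (p + c) = eqpos t l m q p.
Proof. by rewrite !eqpos_dvd opprD addrACA subrr addr0. Qed.

Lemma qarrow_shift t l m x p y q c :
  qarrow t l m x (p + c) y (q + c) = qarrow t l m x p y q.
Proof. by rewrite /qarrow; case: t; rewrite ?(addrAC p c) ?eqpos_addr. Qed.

Lemma yy_per t l m j k z : yy t l m j (k + z * NN t l m) = yy t l m j k.
Proof. by rewrite /yy /yvar (addrC k) modzMDl. Qed.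

Lemma FF_per t l m j k z : FF t l m j (k + z * NN t l m) = FF t l m j k.
Proof.
have yy_perD j' c :
    yy t l m j' (k + z * NN t l m + c) = yy t l m j' (k + c).
  by rewrite addrAC yy_per.
have arrows_per : \prod_(j' <- iota 1 l)
   ((if qarrow t l m j (k + z * NN t l m) j' (k + z * NN t l m)
     then yy t l m j' (k + z * NN t l m + sh t l (di t l j')) else 1) *
    (if qarrow t l m j' (k + z * NN t l m) j (k + z * NN t l m)
     then yy t l m j' (k + z * NN t l m) else 1)) =
  \prod_(j' <- iota 1 l)
   ((if qarrow t l m j k j' k then yy t l m j' (k + sh t l (di t l j')) else 1) *
    (if qarrow t l m j' k j k then yy t l m j' k else 1)).
  by apply: eq_bigr => j' _; rewrite !qarrow_shift yy_perD yy_per.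
by rewrite /FF; case: t yy_perD arrows_per => yy_perD ->; rewrite ?yy_perD ?yy_per.
Qed.

Inductive monomial_off {t l m} (i : nat) : Cy t l m -> Prop :=
  | monomial_off1 : monomial_off i 1
  | monomial_offy j k : j != i -> monomial_off i (yy t l m j k)
  | monomial_offM x y : monomial_off i x -> monomial_off i y -> monomial_off i (x * y).

Lemma Cc_natr_eq0 n : ((n%:R : Cc) == 0) = (n == 0)%N.
Proof. exact: (@pnatr_eq0 (Rdefinitions.R)[i]). Qed.

Lemma Cc_natr_eq1 n : ((n%:R : Cc) == 1) = (n == 1)%N.
Proof. exact: (@pnatr_eq1 (Rdefinitions.R)[i]). Qed.

Section Substitution.
Set Implicit Arguments.
Unset Strict Implicit.
Variables (t : ltype) (l m i : nat).
Local Notation N := (NN t l m).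
Local Notation nv := (nvars t l m).
Local Notation C := (Cy t l m).
Hypothesis N_gt0 : 0 < N.
Hypothesis i_range : (1 <= i <= l)%N.

Let l_gt0 : (0 < l)%N. Proof. by case/andP: i_range => /leq_trans; apply. Qed.

Let absN : (absz N)%:Z = N. Proof. exact/gez0_abs/ltW. Qed.

Let absN_gt0 : (0 < absz N)%N. Proof. by rewrite absz_gt0 gt_eqF. Qed.

Let nvarsE : nv = (l * absz N)%N.
Proof. by rewrite /nvars prednK // muln_gt0 l_gt0 absN_gt0. Qed.

Let modN_ge0 k : 0 <= (k %% N)%Z. Proof. by rewrite modz_ge0 // gt_eqF. Qed.

Let modN_lt k : (absz (k %% N)%Z < absz N)%N.
Proof.
have := ltz_mod k (negbT (gt_eqF N_gt0)).
by rewrite -ltz_nat gez0_abs // absN gtr0_norm.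
Qed.

Lemma yvar_val j k : (1 <= j <= l)%N ->
  yvar t l m j k = ((j.-1) * absz N + absz (k %% N)%Z)%N :> nat.
Proof.
move=> /andP [j_gt0 j_le]; rewrite /yvar inordK // prednK ?muln_gt0 ?l_gt0 //.
apply: (@leq_trans (j.-1 * absz N + absz N)%N); first by rewrite ltn_add2l.
by rewrite addnC -mulSn prednK // leq_mul2r j_le orbT.
Qed.

Definition var_row (v : 'I_nv) : nat := (v %/ absz N).+1.
Definition var_pos (v : 'I_nv) : int := (v %% absz N)%N.

Lemma yvar_row j k : (1 <= j <= l)%N -> var_row (yvar t l m j k) = j.
Proof.
move=> j_range; rewrite /var_row yvar_val // divnMDl // divn_small // addn0.
by case/andP: j_range; case: j.
Qed.

Lemma yvar_pos j k : (1 <= j <= l)%N -> var_pos (yvar t l m j k) = (k %% N)%Z.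
Proof.
by move=> j_range; rewrite /var_pos yvar_val // modnMDl modn_small // gez0_abs.
Qed.

Lemma var_row_range v : (1 <= var_row v <= l)%N.
Proof. by rewrite /var_row /= ltn_divLR // -nvarsE ltn_ord. Qed.

Lemma yvar_var v : yvar t l m (var_row v) (var_pos v) = v.
Proof.
apply: ord_inj; rewrite yvar_val ?var_row_range //= /var_pos modz_small; last first.
  by rewrite lez_nat leq0n /= -[X in _ < X]absN ltz_nat ltn_mod.
by rewrite -divn_eq.
Qed.

Lemma yy_var j k : (1 <= j <= l)%N -> yy t l m j k = ('X_(yvar t l m j k))%:F.
Proof. by move=> j_range; rewrite /yy j_range. Qed.

Lemma r_img_off v : var_row v != i -> r_img t l m i v = ('X_v)%:F.
Proof. by move=> /negbTE row_v; rewrite /r_img -/(var_row v) row_v. Qed.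

Local Notation r_eval := (frac_eval (r_morph t l m i)).
Local Notation ones := (fun _ : 'I_nv => 1 : Cc).
Local Notation twos_at_i := (fun v : 'I_nv => if var_row v == i then 2 else 1 : Cc).
Local Notation eval1 := (frac_eval (meval ones)).
Local Notation eval2 := (frac_eval (meval twos_at_i)).

Lemma yy_eval1 j k : eval1 (yy t l m j k) 1.
Proof. by rewrite /yy; case: ifP => _; [apply: frac_eval_mevalX | apply: frac_eval1]. Qed.

Lemma yy_eval2 j k : eval2 (yy t l m j k) (if j == i then 2 else 1).
Proof.
rewrite /yy; case: ifP => j_range.
  by have := frac_eval_mevalX twos_at_i (yvar t l m j k); rewrite /= yvar_row.
by case: eqP j_range => [->|_ _]; [rewrite i_range | apply: frac_eval1].
Qed.

Lemma monomial_off_eval1 (x : C) : monomial_off i x -> eval1 x 1.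
Proof.
elim=> [|j k _|y z _ y1 _ z1]; [exact: frac_eval1 | exact: yy_eval1 |].
by have := frac_evalM y1 z1; rewrite mulr1.
Qed.

Lemma monomial_off_eval2 (x : C) : monomial_off i x -> eval2 x 1.
Proof.
elim=> [|j k /negbTE j_i|y z _ y1 _ z1]; first exact: frac_eval1.
  by have := yy_eval2 j k; rewrite j_i.
by have := frac_evalM y1 z1; rewrite mulr1.
Qed.

Lemma monomial_off_r (x : C) : monomial_off i x -> r_eval x x.
Proof.
elim=> [|j k j_i|y z _ y_fix _ z_fix]; [exact: frac_eval1 | | exact: frac_evalM].
rewrite /yy; case: ifP => j_range; last exact: frac_eval1.
have := frac_eval_tofrac (r_morph t l m i) 'X_(yvar t l m j k).
by rewrite r_morphX r_img_off // yvar_row.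
Qed.

Lemma yy_neq0 j k : yy t l m j k != 0.
Proof. by apply: frac_eval_neq0 (yy_eval1 j k) _; apply: oner_neq0. Qed.

Lemma monomial_off_neq0 (x : C) : monomial_off i x -> x != 0.
Proof. by move/monomial_off_eval1/frac_eval_neq0; apply; apply: oner_neq0. Qed.

Section Reflection.
Let e := sh t l (di t l i).
Let M := (absz N %/ absz e)%N.
Hypothesis M_e : M%:Z * e = N.
Hypothesis M_ge2 : (2 <= M)%N.
Hypothesis FF_off : forall k, monomial_off i (FF t l m i k).
Local Notation Y := (yy t l m i).
Local Notation F := (FF t l m i).
Local Notation ry := (Rank1.ry e M F Y).

Let Y_neq0 k : Y k != 0. Proof. exact: yy_neq0. Qed.
Let F_neq0 k : F k != 0. Proof. exact: monomial_off_neq0. Qed.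
Let Y_per z k : Y (k + z * (M%:Z * e)) = Y k. Proof. by rewrite M_e yy_per. Qed.
Let F_per z k : F (k + z * (M%:Z * e)) = F k. Proof. by rewrite M_e FF_per. Qed.

Let a_eval1 k : eval1 (Rank1.a e F Y k) 1.
Proof.
have := frac_evalM (yy_eval1 i k) (yy_eval1 i (k + e)).
move/frac_evalM/(_ (frac_evalV (monomial_off_eval1 (FF_off k)) (oner_neq0 _))).
by rewrite !mul1r invr1.
Qed.

Let a_eval2 k : eval2 (Rank1.a e F Y k) 4.
Proof.
have := frac_evalM (yy_eval2 i k) (yy_eval2 i (k + e)); rewrite eqxx -natrM.
move/frac_evalM/(_ (frac_evalV (monomial_off_eval2 (FF_off k)) (oner_neq0 _))).
by rewrite invr1 mulr1.
Qed.

Lemma fy_neq0 k : Rank1.f e M F Y k != 0.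
Proof.
have a_prodV p : eval1 (\prod_(q < p.+1) Rank1.a e F Y (k - q%:Z * e))^-1 1.
  have := frac_eval_prod (index_enum _) (fun q : 'I_p.+1 => a_eval1 (k - q%:Z * e)).
  by rewrite big1_eq => /frac_evalV /(_ (oner_neq0 _)); rewrite invr1.
have := frac_evalD frac_eval1
  (frac_eval_sum (index_enum _) (fun p : 'I_M.-1 => a_prodV p)).
rewrite sumr_const card_ord -mulrS prednK ?(ltnW M_ge2) // => f_eval.
by apply: frac_eval_neq0 f_eval _; rewrite Cc_natr_eq0 -lt0n (ltnW M_ge2).
Qed.

Lemma Xper_neq1 k : Rank1.Xper e M F Y k != 1.
Proof.
have four_neq0 : (4 : Cc) != 0 by rewrite Cc_natr_eq0.
have Xper_eval : eval2 (Rank1.Xper e M F Y k) (4^-1 ^+ M).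
  have := frac_eval_prod (index_enum 'I_M)
    (fun q : 'I_M => frac_evalV (a_eval2 (k - q%:Z * e)) four_neq0).
  by rewrite prodr_const card_ord.
apply/eqP => Xper1; move: Xper_eval; rewrite Xper1.
move/(frac_eval_uniq frac_eval1)/esym/eqP.
rewrite exprVn invr_eq1 -natrX Cc_natr_eq1 -[1%N](expn0 4) eqn_exp2l //.
by case: M M_ge2.
Qed.

Let f_ry_neq0 := Rank1.f_ry_neq0 M_ge2 Y_neq0 F_neq0 Y_per F_per fy_neq0 Xper_neq1.
Let ry_neq0 := Rank1.ry_neq0 Y_neq0 F_neq0 fy_neq0.

Let a_ry_neq0 k : Rank1.a e F ry k != 0.
Proof. exact: Rank1.a_neq0 ry_neq0 F_neq0 k. Qed.

Lemma r_img_row v : var_row v = i -> r_img t l m i v = ry (var_pos v).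
Proof. by move=> row_v; rewrite /r_img -/(var_row v) row_v eqxx. Qed.

Lemma r_yy k : r_eval (Y k) (ry k).
Proof.
have := frac_eval_tofrac (r_morph t l m i) 'X_(yvar t l m i k).
rewrite -yy_var // r_morphX r_img_row ?yvar_row // yvar_pos //.
have -> : (k %% N)%Z = k + (- (k %/ N)%Z) * N by rewrite {2}(divz_eq k N); ring.
by rewrite Rank1.ry_transl // => x; rewrite ?yy_per ?FF_per.
Qed.

Lemma r_a k : r_eval (Rank1.a e F Y k) (Rank1.a e F ry k).
Proof.
apply: frac_evalM (frac_evalV (monomial_off_r (FF_off k)) (F_neq0 k)).
exact: frac_evalM (r_yy k) (r_yy (k + e)).
Qed.

Lemma r_f k : r_eval (Rank1.f e M F Y k) (Rank1.f e M F ry k).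
Proof.
apply: frac_evalD frac_eval1 _; apply: frac_eval_sum => p.
apply: frac_evalV; first by apply: frac_eval_prod => q; apply: r_a.
by apply/prodf_neq0 => q _; apply: a_ry_neq0.
Qed.

Lemma r_ry k : r_eval (ry k) (Y k).
Proof.
rewrite -[Y k](Rank1.ryK M_ge2 Y_neq0 F_neq0 Y_per F_per fy_neq0 Xper_neq1).
apply: frac_evalM; first exact: frac_evalM (r_f _) (frac_evalV (r_f _) (f_ry_neq0 _)).
exact: frac_evalM (monomial_off_r (FF_off _)) (frac_evalV (r_yy _) (ry_neq0 _)).
Qed.

Lemma r_morphXK v : r_eval (r_morph t l m i 'X_v) ('X_v)%:F.
Proof.
rewrite r_morphX; have [row_v|row_v] := eqVneq (var_row v) i.
  by rewrite r_img_row // -{2}(yvar_var v) -yy_var ?var_row_range // row_v; apply: r_ry.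
rewrite r_img_off //.
by have := frac_eval_tofrac (r_morph t l m i) 'X_v; rewrite r_morphX r_img_off.
Qed.

Lemma r_morphK p : r_eval (r_morph t l m i p) p%:F.
Proof.
elim/mpolyind: p => [|c mon p _ _ IH]; first by rewrite !rmorph0; apply: frac_eval0.
rewrite !rmorphD; apply: frac_evalD IH.
rewrite -mul_mpolyC mpolyXE_id !rmorphM !rmorph_prod; apply: frac_evalM.
  by rewrite r_morphC; have := frac_eval_tofrac (r_morph t l m i) c%:MP; rewrite r_morphC.
by apply: frac_eval_prod => j; rewrite !rmorphXn; apply/frac_evalX/r_morphXK.
Qed.

Lemma r_morph_inj : injective (r_morph t l m i).
Proof.
apply: raddf_inj => p p0; have := r_morphK p; rewrite p0.
by move/(frac_eval_uniq frac_eval0)/esym/eqP; rewrite tofrac_eq0 => /eqP.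
Qed.

Lemma r_eval_r x : r_eval x (r t l m i x).
Proof. exact: frac_eval_repr r_morph_inj x. Qed.

Lemma r_eval_gen x : gen_subring (Kgen t l m i) x -> r_eval x x.
Proof.
elim=> [z [[j [k [j_range j_i [->|->]]]] | [k ->]] | | y z _ y_fix _ z_fix | y z _ y_fix _ z_fix].
- exact/monomial_off_r/monomial_offy.
- exact/frac_evalV/yy_neq0/monomial_off_r/monomial_offy.
- have := frac_evalM (r_yy k) (frac_evalD frac_eval1 (frac_evalV (r_a k) (a_ry_neq0 k))).
  by rewrite (Rank1.ry_gen M_ge2 Y_neq0 F_neq0 Y_per F_per fy_neq0 k).
- exact: frac_eval1.
- exact: frac_evalB.
- exact: frac_evalM.
Qed.

Lemma r_fix x : gen_subring (Kgen t l m i) x -> r t l m i x = x.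
Proof. by move/r_eval_gen/(frac_eval_uniq (r_eval_r x)). Qed.

End Reflection.

End Substitution.

Lemma bigmin_attained (R : realDomainType) (I : eqType) (s : seq I) (F : I -> R) x0 lo :
  lo <= x0 -> (forall j, lo <= F j) -> (exists2 j, j \in s & F j = lo) ->
  \big[Num.min/x0]_(j <- s) F j = lo.
Proof.
move=> lo_x0 lo_F [j js Fj]; apply/le_anti/andP; split; last first.
  by elim: s {js} => [|x s IH]; rewrite ?big_nil ?big_cons // le_min lo_F IH.
elim: s js => [//|x s IH]; rewrite big_cons inE => /orP [/eqP <-|/IH le_lo].
  by rewrite ge_min Fj lexx.
by rewrite ge_min le_lo orbT.
Qed.

Lemma bigmax_attained (R : realDomainType) (I : eqType) (s : seq I) (F : I -> R) x0 hi :
  x0 <= hi -> (forall j, F j <= hi) -> (exists2 j, j \in s & F j = hi) ->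
  \big[Num.max/x0]_(j <- s) F j = hi.
Proof.
move=> x0_hi F_hi [j js Fj]; apply/le_anti/andP; split.
  by elim: s {js} => [|x s IH]; rewrite ?big_nil ?big_cons // ge_max F_hi IH.
elim: s js => [//|x s IH]; rewrite big_cons inE => /orP [/eqP <-|/IH hi_le].
  by rewrite le_max Fj lexx.
by rewrite le_max hi_le orbT.
Qed.

Lemma sh_natE t l s (n : nat) : s / dmin t l = n%:R -> sh t l s = n.
Proof. by rewrite /sh => ->; exact: (numq_int n). Qed.

Lemma NN_natE t l m (n : nat) : dmax t l * m%:R / dmin t l = n%:R -> NN t l m = n.
Proof. by rewrite /NN => ->; exact: (numq_int n). Qed.

Definition shift_divides t l m i : Prop :=
  let N := NN t l m in let e := sh t l (di t l i) in
  [/\ 0 < N, (absz N %/ absz e)%N%:Z * e = N & (2 <= absz N %/ absz e)%N].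

Lemma shift_dividesP {t l m i} {q e : nat} :
  NN t l m = (q * e)%N -> sh t l (di t l i) = e -> (0 < e)%N -> (2 <= q)%N ->
  shift_divides t l m i.
Proof.
move=> NNE shE e_gt0 q_ge2; rewrite /shift_divides /= NNE shE !absz_nat mulnK //.
by split=> //; rewrite ltz_nat muln_gt0 e_gt0 (leq_trans _ q_ge2).
Qed.

Lemma eqpos_self {t l m k c} : 0 < c < NN t l m -> eqpos t l m k (k + c) = false.
Proof.
move=> /andP [c_gt0 c_lt]; rewrite eqpos_dvd opprD addNKr dvdzE abszN.
apply/negbTE/negP => /(dvdn_leq _); rewrite absz_gt0 gt_eqF // => /(_ isT).
by rewrite -lez_nat !gez0_abs ?(ltW c_gt0) ?(ltW (lt_trans c_gt0 c_lt)) // leNgt c_lt.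
Qed.

Lemma monomial_off_arrows t l m i k : qarrow t l m i k i k = false ->
  monomial_off i (\prod_(j <- iota 1 l)
     ((if qarrow t l m i k j k then yy t l m j (k + sh t l (di t l j)) else 1) *
      (if qarrow t l m j k i k then yy t l m j k else 1))).
Proof.
move=> no_loop; apply: (big_ind (monomial_off i)) => [|x y|j _].
- exact: monomial_off1.
- exact: monomial_offM.
have [->|j_i] := eqVneq j i; first by rewrite no_loop mul1r; apply: monomial_off1.
by apply: monomial_offM; case: ifP => _; apply: monomial_off1 || apply: monomial_offy.
Qed.

Definition reflection_setting t l m i : Prop :=
  shift_divides t l m i /\ forall k, monomial_off i (FF t l m i k).

Lemma reflection_setting_ADE t l m i : t = TA \/ t = TD \/ t = TE ->
  (1 < m)%N -> (1 <= i <= l)%N -> reflection_setting t l m i.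
Proof.
move=> t_ADE m_gt1 i_range.
have di1 j : di t l j = 1 by case: t_ADE => [|[|]] ->.
have dmin1 : dmin t l = 1.
  apply: bigmin_attained => [|j|]; rewrite ?di1 //.
  by exists 1%N; rewrite ?di1 // mem_iota; lia.
have dmax1 : dmax t l = 1.
  apply: bigmax_attained => [|j|]; rewrite ?di1 //.
  by exists 1%N; rewrite ?di1 // mem_iota; lia.
have NNE : NN t l m = (m * 1)%N by apply: NN_natE; rewrite dmin1 dmax1 muln1; field.
have sh1 : sh t l 1 = 1%N by apply: sh_natE; rewrite dmin1; field.
split; first by apply: (shift_dividesP NNE); rewrite ?di1.
move=> k; have no_loop : qarrow t l m i k i k = false.
  have self_k : eqpos t l m k (k + sh t l 1) = false.
    by rewrite sh1 eqpos_self // NNE ltz_nat; apply/andP; split=> //; lia.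
  have no_edge : Carrow t l i i = false by rewrite /Carrow /dynkin_edge ltnn andbF.
  rewrite /qarrow; case: t_ADE no_edge self_k => [|[|]] -> no_edge self_k;
  by rewrite no_edge self_k !andbF.
have -> : FF t l m i k = \prod_(j <- iota 1 l)
     ((if qarrow t l m i k j k then yy t l m j (k + sh t l (di t l j)) else 1) *
      (if qarrow t l m j k i k then yy t l m j k else 1)).
  by rewrite /FF; case: t_ADE => [|[|]] ->.
exact: monomial_off_arrows.
Qed.

Lemma reflection_setting_B l m i : valid_type TB l ->
  (1 < m)%N -> (1 <= i <= l)%N -> reflection_setting TB l m i.
Proof.
move=> /= l_ge2 m_gt1 i_range.
have dminE : dmin TB l = 1 / 2.
  apply: bigmin_attained => [|j|]; rewrite /di /=; try by [lra | case: ifP => _; lra].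
  by exists l; rewrite ?eqxx // mem_iota; lia.
have dmaxE : dmax TB l = 1.
  apply: bigmax_attained => [|j|]; rewrite /di /=; try by [lra | case: ifP => _; lra].
  by exists 1%N; rewrite ?mem_iota; [lia | case: eqP => //; lia].
have NNE : NN TB l m = (m * 2)%N by apply: NN_natE; rewrite dminE dmaxE natrM; field.
have sh1 : sh TB l 1 = 2%N by apply: sh_natE; rewrite dminE; field.
have sh_half : sh TB l (1 / 2) = 1%N by apply: sh_natE; rewrite dminE; field.
split.
  have [->|i_l] := eqVneq i l.
    by apply: (@shift_dividesP _ _ _ _ (m * 2) 1); rewrite ?NNE ?muln1 /di ?eqxx //; lia.
  by apply: (@shift_dividesP _ _ _ _ m 2); rewrite ?NNE /di ?(negbTE i_l).
move=> k; rewrite /FF.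
case: eqP => [->|/eqP i_l].
  by apply: monomial_offM; apply: monomial_offy; apply/eqP; lia.
case: eqP => [->|/eqP i_l1].
  by apply: monomial_offM; [apply: monomial_offM|]; apply: monomial_offy; apply/eqP; lia.
have N1 : 0 < 1%N%:Z < NN TB l m by rewrite NNE ltz_nat; apply/andP; split=> //; lia.
have N2 : 0 < 2%N%:Z < NN TB l m by rewrite NNE ltz_nat; apply/andP; split=> //; lia.
have i_pred : (i == i.-1) = false by apply/eqP; lia.
apply: monomial_off_arrows; rewrite /qarrow sh1 sh_half (eqpos_self N2) (eqpos_self N1).
by rewrite !andbF /= i_pred (negbTE i_l) (negbTE i_l1) !andbF.
Qed.

Lemma reflection_setting_C l m i : valid_type TC l ->
  (1 < m)%N -> (1 <= i <= l)%N -> reflection_setting TC l m i.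
Proof.
move=> /= l_ge2 m_gt1 i_range.
have dminE : dmin TC l = 1.
  apply: bigmin_attained => [|j|]; rewrite /di /=; try by [lra | case: ifP => _; lra].
  by exists 1%N; rewrite ?mem_iota; [lia | case: eqP => //; lia].
have dmaxE : dmax TC l = 2.
  apply: bigmax_attained => [|j|]; rewrite /di /=; try by [lra | case: ifP => _; lra].
  by exists l; rewrite ?eqxx // mem_iota; lia.
have NNE : NN TC l m = (m * 2)%N by apply: NN_natE; rewrite dminE dmaxE natrM; field.
have sh1 : sh TC l 1 = 1%N by apply: sh_natE; rewrite dminE; field.
have sh2 : sh TC l 2 = 2%N by apply: sh_natE; rewrite dminE; field.
split.
  have [->|i_l] := eqVneq i l.
    by apply: (@shift_dividesP _ _ _ _ m 2); rewrite /di ?eqxx.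
  by apply: (@shift_dividesP _ _ _ _ (m * 2) 1); rewrite ?NNE ?muln1 /di ?(negbTE i_l) //; lia.
move=> k; rewrite /FF.
case: eqP => [->|/eqP i_l].
  by apply: monomial_offM; apply: monomial_offy; apply/eqP; lia.
have N1 : 0 < 1%N%:Z < NN TC l m by rewrite NNE ltz_nat; apply/andP; split=> //; lia.
have N2 : 0 < 2%N%:Z < NN TC l m by rewrite NNE ltz_nat; apply/andP; split=> //; lia.
have i_pred : (i == i.-1) = false by apply/eqP; lia.
apply: monomial_off_arrows; rewrite /qarrow sh1 sh2 (eqpos_self N2) (eqpos_self N1).
by rewrite !andbF /= i_pred (negbTE i_l) !andbF.
Qed.

Lemma reflection_setting_F l m i : valid_type TF l ->
  (1 < m)%N -> (1 <= i <= l)%N -> reflection_setting TF l m i.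
Proof.
move=> /eqP -> m_gt1 i_range.
have dminE : dmin TF 4 = 1 / 2.
  apply: bigmin_attained => [|j|]; rewrite /di /=; try by [lra | case: ifP => _; lra].
  by exists 3%N.
have dmaxE : dmax TF 4 = 1.
  apply: bigmax_attained => [|j|]; rewrite /di /=; try by [lra | case: ifP => _; lra].
  by exists 1%N.
have NNE : NN TF 4 m = (m * 2)%N by apply: NN_natE; rewrite dminE dmaxE natrM; field.
have sh1 : sh TF 4 1 = 2%N by apply: sh_natE; rewrite dminE; field.
have sh_half : sh TF 4 (1 / 2) = 1%N by apply: sh_natE; rewrite dminE; field.
split.
  have [i_le2|i_gt2] := leqP i 2.
    by apply: (@shift_dividesP _ _ _ _ m 2); rewrite /di ?i_le2.
  apply: (@shift_dividesP _ _ _ _ (m * 2) 1); rewrite ?NNE ?muln1 //; last by lia.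
  by rewrite /di leqNgt i_gt2.
move=> k; rewrite /FF.
case: eqP => [->|/eqP i_3]; first by apply: monomial_offM; apply: monomial_offy.
case: eqP => [->|/eqP i_2].
  by apply: monomial_offM; [apply: monomial_offM|]; apply: monomial_offy.
have N1 : 0 < 1%N%:Z < NN TF 4 m by rewrite NNE ltz_nat; apply/andP; split=> //; lia.
have N2 : 0 < 2%N%:Z < NN TF 4 m by rewrite NNE ltz_nat; apply/andP; split=> //; lia.
apply: monomial_off_arrows; rewrite /qarrow sh1 sh_half (eqpos_self N2) (eqpos_self N1).
by rewrite !andbF /= (negbTE i_2) (negbTE i_3) !andbF.
Qed.

Lemma reflection_setting_G l m i : valid_type TG l ->
  (1 < m)%N -> (1 <= i <= l)%N -> reflection_setting TG l m i.
Proof.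
move=> /eqP -> m_gt1 i_range.
have dminE : dmin TG 2 = 1.
  apply: bigmin_attained => [|j|]; rewrite /di /=; try by [lra | case: ifP => _; lra].
  by exists 1%N.
have dmaxE : dmax TG 2 = 3.
  apply: bigmax_attained => [|j|]; rewrite /di /=; try by [lra | case: ifP => _; lra].
  by exists 2%N.
have NNE : NN TG 2 m = (m * 3)%N by apply: NN_natE; rewrite dminE dmaxE natrM; field.
have sh1 : sh TG 2 1 = 1%N by apply: sh_natE; rewrite dminE; field.
have sh3 : sh TG 2 3 = 3%N by apply: sh_natE; rewrite dminE; field.
split.
  have [->|i_2] := eqVneq i 2; first by apply: (@shift_dividesP _ _ _ _ m 3).
  by apply: (@shift_dividesP _ _ _ _ (m * 3) 1); rewrite ?NNE ?muln1 /di ?(negbTE i_2) //; lia.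
move=> k; rewrite /FF.
case: eqP => [->|/eqP i_2].
  by apply: monomial_offM; [apply: monomial_offM|]; apply: monomial_offy.
have N1 : 0 < 1%N%:Z < NN TG 2 m by rewrite NNE ltz_nat; apply/andP; split=> //; lia.
apply: monomial_off_arrows; rewrite /qarrow sh1 (eqpos_self N1).
by rewrite !andbF /= (negbTE i_2) !andbF.
Qed.

Lemma reflection_setting_valid {t l m i} : valid_type t l ->
  (1 < m)%N -> (1 <= i <= l)%N -> reflection_setting t l m i.
Proof.
case: t => t_valid.
- by apply: reflection_setting_ADE; left.
- exact: reflection_setting_B.
- exact: reflection_setting_C.
- by apply: reflection_setting_ADE; right; left.
- by apply: reflection_setting_ADE; right; right.
- exact: reflection_setting_F.
- exact: reflection_setting_G.
Qed.

Theorem proposition4p13 (t : ltype) (l m : nat) :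
  valid_type t l -> (1 < m)%N -> (l.-1 < m)%N ->
  forall (i : nat) (f : Cy t l m),
    (1 <= i <= l)%N -> Ychi t l m f -> r t l m i f = f.
Proof.
move=> t_valid m_gt1 _ i f i_range f_Y.
have [[N_gt0 M_e M_ge2] FF_off] := reflection_setting_valid t_valid m_gt1 i_range.
exact: r_fix N_gt0 i_range M_e M_ge2 FF_off f (f_Y i i_range).
Qed.
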